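(* Fix integers $a \ge 2$ and $\beta \ge 1$. Then there is a finite set $E$ of pairs of integers (depending only on $a$ and $\beta$) such that for all integers $\alpha \ge a$ and $r \ge a$ with $(\alpha, r) \notin E$ the following holds: for every integer $u_0 \ge 1$ with $\gcd(u_0,r)=1$ and every integer $n > r^{\alpha}$, $$L_n \ge u_0\, r^{\alpha + \beta + a - 2}\,(r+1)^n,$$ where $L_n := \operatorname{lcm}\{u_0, u_0 + r, u_0 + 2r, \ldots, u_0 + nr\}$.
   Context: For positive coprime integers $u_0, r$, the arithmetic progression is $u_k = u_0 + kr$, and $L_n$ is the least common multiple of $u_0, u_1, \ldots, u_n$. *)

From mathcomp Require Import all_boot.
Set Implicit Arguments. Unset Strict Implicit. Unset Printing Implicit Defensive.

Definition Lseq (u0 r n : nat) : nat :=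
  \big[lcmn/1%N]_(k < n.+1) (u0 + k * r).

From mathcomp Require Import all_boot zify.

Set Implicit Arguments.
Unset Strict Implicit.
Unset Printing Implicit Defensive.

(* Take the last m + 1 terms u_(n-m), ..., u_n of the progression.  Their
   product P divides L_n * m! * r^m, is coprime to r, and r^(m / r) divides
   m!, so P * r^(m / r) <= L_n * m!; since P * (n - m)! >= u0 * r^m * n!,
   this gives L_n >= u0 * C(n, m) * r^m * r^(m / r).  Choosing m maximising
   C(n, m) * r^m, the binomial theorem bounds (r + 1)^n by n + 1 such terms,
   and m >= n / 2 since the term of index n - m would otherwise be larger.
   Finally r^(m / r) beats r^c * (n + 1) as soon as m / r >= 2c + 5, which
   for c = alpha + beta + a - 2 and n > r^alpha fails only for finitely many
   pairs (alpha, r). *)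

Section ArithmeticProgression.

Variable r : nat.

Lemma prod_arith_prog_dvdn b m L :
  (forall i, i <= m -> b + i * r %| L) ->
  \prod_(i < m.+1) (b + i * r) %| L * m`! * r ^ m.
Proof.
elim: m b => [|m IHm] b dvdL.
  by rewrite big_ord1 fact0 expn0 !muln1; exact: (dvdL 0).
have dvd_head := IHm b (fun i le_im => dvdL i (leqW le_im)).
have dvd_tail : \prod_(i < m.+1) (b + r + i * r) %| L * m`! * r ^ m.
  by apply: IHm => i le_im; rewrite -addnA -mulSn; exact: dvdL i.+1 le_im.
set Z := L * m`! * r ^ m in dvd_head dvd_tail *.
(* (m+1) r Z = (b + (m+1) r) Z - b Z, and the product divides both terms: it
   is (b + (m+1) r) times the product of the first m+1 factors, and b times
   the product of the last m+1. *)
have -> : L * m.+1`! * r ^ m.+1 = Z * (b + m.+1 * r) - Z * b.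
  by rewrite /Z factS expnS mulnDr addKn; lia.
apply: dvdn_sub; first by rewrite big_ord_recr /= dvdn_mul.
rewrite big_ord_recl /= mul0n addn0 mulnC dvdn_mul //.
by under eq_bigr => i _ do rewrite /bump /= add1n mulSn addnA.
Qed.

Lemma prod_arith_prog_ge b k m :
  b * r ^ m * (k + m)`! <= (\prod_(i < m.+1) (b + k * r + i * r)) * k`!.
Proof.
elim: m => [|m IHm].
  by rewrite big_ord1 expn0 muln1 addn0 mul0n addn0 leq_mul2r leq_addr orbT.
rewrite big_ord_recr /= addnS factS expnS.
have le_term : (k + m).+1 * r <= b + k * r + m.+1 * r.
  by rewrite -addnA -mulnDl addnS leq_addl.
apply: (@leq_trans (b * r ^ m * (k + m)`! * ((k + m).+1 * r))); first lia.
by rewrite [leqRHS]mulnAC leq_mul.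
Qed.

Lemma coprime_addMr b k : coprime (b + k * r) r = coprime b r.
Proof. by rewrite /coprime gcdnC addnC gcdnMDl gcdnC. Qed.

Lemma coprime_prod_arith_prog b m :
  coprime b r -> coprime (\prod_(i < m) (b + i * r)) r.
Proof.
move=> cop_br; apply: (big_ind (coprime^~ r)) => [|x y|i _].
- exact: coprime1n.
- by rewrite coprimeMl => -> ->.
- by rewrite coprime_addMr.
Qed.

Lemma expn_div_dvdn_fact m : 0 < r -> r ^ (m %/ r) %| m`!.
Proof.
move=> r_gt0; suff dvd_fact q : r ^ q %| (q * r)`!.
  by apply: dvdn_trans (dvd_fact _) _; rewrite (fact_split (leq_divM m r)) dvdn_mulr.
elim: q => [|q IHq]; first by rewrite expn0 dvd1n.
have -> : q.+1 * r = (q * r + r.-1).+1 by rewrite mulSn; lia.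
rewrite expnS factS dvdn_mul //.
  by rewrite -addnS prednK // dvdn_add ?dvdn_mull.
by apply: dvdn_trans IHq _; rewrite (fact_split (leq_addr _ _)) dvdn_mulr.
Qed.

End ArithmeticProgression.

Lemma Lseq_term_dvdn u0 r n k : k <= n -> u0 + k * r %| Lseq u0 r n.
Proof. by rewrite -ltnS => lt_kn; exact: (biglcmn_sup (Ordinal lt_kn)). Qed.

Lemma Lseq_gt0 u0 r n : 0 < u0 -> 0 < Lseq u0 r n.
Proof.
move=> u0_gt0; apply: (big_ind (leq 1)) => // [x y x_gt0 y_gt0|i _].
  by rewrite lcmn_gt0 x_gt0.
exact: leq_trans u0_gt0 (leq_addr _ _).
Qed.

Lemma prod_tail_le_Lseq u0 r n m :
  0 < u0 -> 0 < r -> coprime u0 r -> m <= n ->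
  (\prod_(i < m.+1) (u0 + (n - m) * r + i * r)) * r ^ (m %/ r)
    <= Lseq u0 r n * m`!.
Proof.
move=> u0_gt0 r_gt0 cop_u0r le_mn.
set P := \prod_(i < _) _; set L := Lseq u0 r n; set q := r ^ (m %/ r).
have dvd_PL : P %| L * m`! * r ^ m.
  apply: prod_arith_prog_dvdn => i le_im.
  by rewrite -addnA -mulnDl Lseq_term_dvdn //; lia.
have cop_Pr : coprime P r.
  by apply: coprime_prod_arith_prog; rewrite coprime_addMr.
have fact_q : m`! = m`! %/ q * q by rewrite divnK // expn_div_dvdn_fact.
have dvd_P : P %| L * (m`! %/ q).
  rewrite -(@Gauss_dvdl _ _ (q * r ^ m)); last by rewrite coprimeMr !coprimeXr.
  by rewrite mulnA -(mulnA L) -fact_q.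
have fq_gt0 : 0 < m`! %/ q by move: (fact_gt0 m); rewrite {1}fact_q muln_gt0 => /andP[].
rewrite {1}fact_q mulnA leq_mul2r; apply/orP; right.
by apply: dvdn_leq dvd_P; rewrite muln_gt0 fq_gt0 Lseq_gt0.
Qed.

Lemma binomial_le_Lseq u0 r n m :
  0 < u0 -> 0 < r -> coprime u0 r -> m <= n ->
  u0 * ('C(n, m) * r ^ m) * r ^ (m %/ r) <= Lseq u0 r n.
Proof.
move=> u0_gt0 r_gt0 cop_u0r le_mn.
have := prod_tail_le_Lseq u0_gt0 r_gt0 cop_u0r le_mn.
have := prod_arith_prog_ge r u0 (n - m) m; rewrite subnK //.
set P := \prod_(i < _) _ => le_P le_PL.
rewrite -(@leq_pmul2r (m`! * (n - m)`!)) ?muln_gt0 ?fact_gt0 //.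
have -> : u0 * ('C(n, m) * r ^ m) * r ^ (m %/ r) * (m`! * (n - m)`!)
          = u0 * r ^ m * n`! * r ^ (m %/ r) by rewrite -(bin_fact le_mn); lia.
apply: leq_trans (leq_mul le_P (leqnn _)) _.
by rewrite mulnAC mulnA leq_mul2r le_PL orbT.
Qed.

Lemma binomial_max_term r n : 1 < r ->
  exists2 m : 'I_n.+1, n <= 2 * m & r.+1 ^ n <= n.+1 * ('C(n, m) * r ^ m).
Proof.
move=> r_gt1; pose T (i : 'I_n.+1) := 'C(n, i) * r ^ i.
have [m _ max_m] := @arg_maxnP _ ord0 xpredT T isT.
have le_m : n <= 2 * m.
  rewrite leqNgt; apply/negP => lt_m.
  have le_mn : m <= n by rewrite -ltnS.
  have lt_nm : n - m < n.+1 by lia.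
  (* The symmetric term C(n, n - m) r^(n - m) is strictly larger. *)
  have := max_m (Ordinal lt_nm) isT; rewrite /T /= bin_sub // leqNgt ltn_mul2l.
  rewrite bin_gt0 le_mn ltn_exp2l //; lia.
exists m => //.
rewrite -addn1 addnC expnDn.
apply: (@leq_trans (\sum_(i < n.+1) T m)); last by rewrite sum_nat_const card_ord.
by apply: leq_sum => i _; rewrite exp1n mul1n; exact: max_m.
Qed.

Lemma double_le_exp2 j : 2 * j <= 2 ^ j.
Proof. by case: j => // j; rewrite expnS leq_mul2l ltn_expl. Qed.

Lemma sq_le_exp2 j : 4 <= j -> j * j <= 2 ^ j.
Proof.
elim: j => // j IHj le4j; case: (ltnP j 4) => [lt_j4|le4j'].
  by have -> : j = 3 by lia.
by have := IHj le4j'; rewrite expnS; nia.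
Qed.

Lemma expn_div_ge r c m n : 1 < r -> n <= 2 * m -> 2 * c + 5 <= m %/ r ->
  r ^ c * n.+1 <= r ^ (m %/ r).
Proof.
move=> r_gt1 le_nm le_cH; set H := m %/ r in le_cH *.
have lt_mH : m < (H + 1) * r.
  by rewrite /H {1}(divn_eq m r) mulnDl mul1n ltn_add2l ltn_pmod //; lia.
have le_n : n.+1 <= r * r * (H + 1).
  by apply: (@leq_trans (2 * r * (H + 1))); [nia | rewrite !leq_mul2r r_gt1 !orbT].
pose j := H - (c + 2).
have le_Hj : H + 1 <= r ^ j.
  apply: (@leq_trans (2 * j)); first lia.
  by apply: leq_trans (double_le_exp2 j) _; rewrite leq_exp2r //; lia.
rewrite (_ : H = c + 2 + j) ?expnD -?mulnA ?leq_mul2l; last lia.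
by apply/orP; right; apply: leq_trans le_n _; rewrite mulnA leq_mul2l le_Hj orbT.
Qed.

Theorem Lseq_ge u0 r n c : 0 < u0 -> 1 < r -> coprime u0 r ->
  2 * c + 5 <= n %/ (2 * r) -> u0 * r ^ c * r.+1 ^ n <= Lseq u0 r n.
Proof.
move=> u0_gt0 r_gt1 cop_u0r le_cn.
have r_gt0 : 0 < r by lia.
have [m le_nm le_binom] := binomial_max_term n r_gt1.
have le_cm : 2 * c + 5 <= m %/ r.
  apply: leq_trans le_cn _; rewrite leq_divRL //.
  by have := leq_divM n (2 * r); nia.
apply: leq_trans (binomial_le_Lseq u0_gt0 r_gt0 cop_u0r (ltnSE (ltn_ord m))).
apply: (@leq_trans (u0 * r ^ c * (n.+1 * ('C(n, m) * r ^ m)))).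
  by rewrite leq_mul2l le_binom orbT.
rewrite [leqLHS](_ : _ = u0 * ('C(n, m) * r ^ m) * (r ^ c * n.+1)); last lia.
by rewrite leq_mul2l expn_div_ge ?orbT.
Qed.

Lemma linear_le_expn_pred K alpha r : 2 <= alpha -> 2 <= r ->
  K + 8 <= maxn alpha r -> 4 * alpha + K <= r ^ alpha.-1.
Proof.
move=> le2a le2r; rewrite leq_max => /orP[le_a|le_r].
  apply: (@leq_trans (2 ^ alpha.-1)); last by rewrite leq_exp2r //; lia.
  by apply: leq_trans (sq_le_exp2 (j := alpha.-1) _); nia.
have -> : r ^ alpha.-1 = r * r ^ (alpha - 2) by rewrite -expnS; congr (_ ^ _); lia.
have : alpha - 2 < r ^ (alpha - 2) by rewrite ltn_expl.
nia.
Qed.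

Lemma expn_pred_half_le r alpha n : 0 < r -> 0 < alpha -> r ^ alpha < n ->
  r ^ alpha.-1 %/ 2 <= n %/ (2 * r).
Proof.
move=> r_gt0 alpha_gt0 lt_n; rewrite leq_divRL ?muln_gt0 //.
apply: leq_trans (ltnW lt_n); rewrite -(prednK alpha_gt0) expnSr mulnA leq_mul2r.
by rewrite leq_divM orbT.
Qed.

Theorem corollary3p2 (a beta : nat) (ha : 2 <= a) (hbeta : 1 <= beta) :
  exists E : seq (nat * nat),
    forall alpha r : nat, a <= alpha -> a <= r -> (alpha, r) \notin E ->
    forall u0 n : nat, 1 <= u0 -> coprime u0 r -> r ^ alpha < n ->
      u0 * r ^ (alpha + beta + a - 2) * (r.+1) ^ n <= Lseq u0 r n.
Proof.
pose K := 4 * beta + 4 * a + 2.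
exists [seq (x, y) | x <- iota 0 (K + 8), y <- iota 0 (K + 8)].
move=> alpha r le_a le_r notin_E u0 n u0_gt0 cop_u0r lt_n.
have le2_alpha := leq_trans ha le_a; have le2_r := leq_trans ha le_r.
have le_K : K + 8 <= maxn alpha r.
  rewrite leqNgt; apply: contra notin_E => lt_K.
  by apply: allpairs_f; rewrite mem_iota; lia.
apply: Lseq_ge => //.
apply: leq_trans (expn_pred_half_le (ltnW le2_r) (ltnW le2_alpha) lt_n).
rewrite leq_divRL //.
by have := linear_le_expn_pred le2_alpha le2_r le_K; rewrite /K; lia.
Qed.
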